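(* Consider the following model. A principal P and an agent A interact over two periods $t\in\{1,2\}$. States $\omega_t\in\{0,1\}$ satisfy $\Pr[\omega_1=1]=\mu_0\in(0,1)$ and $\Pr[\omega_2=\omega\mid\omega_1=\omega]=\rho\in(1/2,1)$. In each period A chooses $e_t\in\{0,1\}$; if $e_t=1$ he observes $\omega_t$, if $e_t=0$ he observes $\omega_t$ with probability $\pi\in(0,1)$ and nothing otherwise. A reports $r_t\in\{\varnothing,\omega_t\}$ if he observed $\omega_t$, else $r_t=\varnothing$. P chooses $x=\hat x(r_1,r_2)\in\{0,1\}$ at the end of period 2. Payoffs: P gets $\mathbb{1}[x=\omega_2]-k(e_1+e_2)$, A gets $x-c(e_1+e_2)$, $c,k>0$. A mechanism consists of $\sigma_1\in\{0,1\}$, $\sigma_2:\{\varnothing,0,1\}\to\{0,1\}$, $\hat x:\{\varnothing,0,1\}^2\to\{0,1\}$, to which P commits; A best-responds, following the recommendation and disclosing when indifferent. A mechanism is IC if at every history occurring with positive probability A optimally obeys the testing recommendation and discloses every observed result, and $\hat x(r_1,\varnothing)=0$ whenever $\sigma_2(r_1)=1$. Let $\kappa=k/(1-\pi)$, $\gamma=c/(1-\pi)$, $\mu_2(\varnothing)=\rho\mu_0+(1-\rho)(1-\mu_0)$, $\bar\kappa=(1-\rho)/(1-\pi)$, $\bar\gamma=(1-\rho)[\mu_0-(1-\mu_0)(1-\pi)]/\pi$, and assume $\kappa\in(1-\rho,\min\{\mu_2(\varnothing),1-\mu_2(\varnothing)\}]$ and $\gamma\in(1-\rho,\mu_2(\varnothing)]$.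 Then a mechanism maximizing P's expected payoff among IC mechanisms has $\sigma_1=0$ and: (i) if $\kappa>\bar\kappa$ and $\gamma\ge\bar\gamma$: $\sigma_2(r_1)=\mathbb{1}[r_1=\varnothing]$ and $\hat x(r_1,r_2)=\mathbb{1}[r_1=1]+\mathbb{1}[r_1\neq1]\mathbb{1}[r_2=1]$; (ii) if $\kappa\in(1-\rho,\bar\kappa)$ or $\gamma<\bar\gamma$: $\sigma_2(0)=0$, $\sigma_2(1)=1$, $\sigma_2(\varnothing)=1$, and $\hat x(r_1,r_2)=\mathbb{1}[r_2=1]$; (iii) if $\kappa=\bar\kappa$, either of the two previous mechanisms is optimal.
   Context: P's expected payoff is the expected value of $\mathbb{1}[\hat x(r_1,r_2)=\omega_2]-k(e_1+e_2)$ under the behavior induced by the mechanism. Every mechanism's outcomes can be replicated by an IC mechanism, so optimality among IC mechanisms is optimality among all mechanisms. *)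

From HB Require Import structures.
From mathcomp Require Import all_boot all_order all_algebra.
Set Implicit Arguments. Unset Strict Implicit. Unset Printing Implicit Defensive.
Import Order.TTheory GRing.Theory Num.Theory.
Local Open Scope ring_scope.

(* Reports / observations: None = "nothing" (varnothing), Some w = state w. *)
Notation report := (option bool).

Record mech := Mech {
  sig1 : bool;
  sig2 : report -> bool;
  xhat : report -> report -> bool
}.

(* In period 1 he chooses e1, and, if he
   observed omega_1 = w, whether to disclose it (d1 w).  In period 2 his
   information is his period-1 observation o1 (which determines his report r1
   and the recommendation sigma_2(r1)); he chooses e2 o1 and, having observed
   omega_2 = w, whether to disclose it (d2 o1 w). *)
Record strat := Strat {
  se1 : bool;
  sd1 : bool -> bool;
  se2 : report -> bool;
  sd2 : report -> bool -> bool
}.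

Definition obedient (M : mech) : strat :=
  Strat (sig1 M) (fun _ => true) (sig2 M) (fun _ _ => true).

Section Model.
Variables (R : realFieldType) (mu0 rho pi c k : R).

Definition b2R (b : bool) : R := if b then 1 else 0.

Definition p_w1 (w1 : bool) : R := if w1 then mu0 else 1 - mu0.
Definition p_trans (w1 w2 : bool) : R := if w1 == w2 then rho else 1 - rho.
(* u = true : the agent observes the state without testing (prob. pi) *)
Definition p_luck (u : bool) : R := if u then pi else 1 - pi.

Definition observe (e w u : bool) : report := if e || u then Some w else None.
Definition disclose (d : bool -> bool) (o : report) : report :=
  if o is Some w then (if d w then Some w else None) else None.

Definition p_out (w1 w2 u1 u2 : bool) : R :=
  p_w1 w1 * p_trans w1 w2 * p_luck u1 * p_luck u2.

Definition o1_of (s : strat) w1 u1 := observe (se1 s) w1 u1.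
Definition e2_of (s : strat) w1 u1 := se2 s (o1_of s w1 u1).
Definition r1_of (s : strat) w1 u1 := disclose (sd1 s) (o1_of s w1 u1).
Definition r2_of (s : strat) w1 w2 u1 u2 :=
  disclose (sd2 s (o1_of s w1 u1)) (observe (e2_of s w1 u1) w2 u2).
Definition x_of (M : mech) (s : strat) w1 w2 u1 u2 : bool :=
  xhat M (r1_of s w1 u1) (r2_of s w1 w2 u1 u2).
Definition effort (s : strat) w1 u1 : R := b2R (se1 s) + b2R (e2_of s w1 u1).

Definition UA (M : mech) (s : strat) : R :=
  \sum_(w1 : bool) \sum_(w2 : bool) \sum_(u1 : bool) \sum_(u2 : bool)
    p_out w1 w2 u1 u2 * (b2R (x_of M s w1 w2 u1 u2) - c * effort s w1 u1).

Definition UP (M : mech) (s : strat) : R :=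
  \sum_(w1 : bool) \sum_(w2 : bool) \sum_(u1 : bool) \sum_(u2 : bool)
    p_out w1 w2 u1 u2 * (b2R (x_of M s w1 w2 u1 u2 == w2) - k * effort s w1 u1).

Definition payoffP (M : mech) : R := UP M (obedient M).

(* Obeying and always disclosing is optimal for A
   (ex ante against every strategy; for this finite game this is equivalent to
   optimality at every positive-probability history), and
   x-hat(r1, varnothing) = 0 whenever sigma_2(r1) = 1. *)
Definition IC (M : mech) : Prop :=
  (forall s : strat, UA M s <= UA M (obedient M)) /\
  (forall r1 : report, sig2 M r1 -> xhat M r1 None = false).

Definition optimal_IC (M : mech) : Prop :=
  IC M /\ forall M' : mech, IC M' -> payoffP M' <= payoffP M.

End Model.

Definition mech_i : mech :=
  Mech false (fun r1 => r1 == None)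
       (fun r1 r2 => (r1 == Some true) || ((r1 != Some true) && (r2 == Some true))).
Definition mech_ii : mech :=
  Mech false (fun r1 => r1 != Some false) (fun _ r2 => r2 == Some true).

From HB Require Import structures.
From mathcomp Require Import all_boot all_order all_algebra.
From mathcomp Require Import ring lra.
Set Implicit Arguments. Unset Strict Implicit. Unset Printing Implicit Defensive.
Import Order.TTheory GRing.Theory Num.Theory.
Local Open Scope ring_scope.

(* Given A's period-1 observation o, the rest of the game is a one-period problem
   governed by the row x-hat(r1, .), so both payoffs are weighted sums of period-2
   continuation values, and obedience is optimal as soon as no deviation after a
   single observation and no period-1 test pays.  Testing in period 1 is never
   better for P than mechanism (ii).  Otherwise the rows after r1 = 0 and r1 = None
   are worth at most rho + pi (1 - rho) and 1 - k to P, and IC caps the row after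
   r1 = 1 at 1 - k unless that row pays x = 1 outright, which is worth rho.  Hence
   every IC mechanism earns at most the better of (i) and (ii), whose payoffs differ
   by pi mu0 (k - (1 - rho)).  When gamma < gbar, paying x = 1 outright after r1 = 1
   tempts A to test in period 1 unless the None row departs from x = 1[r2 = 1],
   which costs P at least pi k, more than the gain pi mu0 (k - (1 - rho)). *)

Lemma sum_report (R : nmodType) (F : report -> R) :
  \sum_(o : report) F o = F None + F (Some true) + F (Some false).
Proof. by rewrite /index_enum !unlock /= !unlock /= addr0 addrA. Qed.

Lemma b2R_negb (R : realFieldType) (b : bool) : b2R R (~~ b) = 1 - b2R R b.
Proof. by case: b; rewrite /b2R /= ?subrr ?subr0. Qed.

Section Continuation.
Variables (R : realFieldType) (mu0 rho pi c k : R).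

Definition mu2 : R := rho * mu0 + (1 - rho) * (1 - mu0).

Definition belief (o : report) : R :=
  if o is Some w then p_trans rho w true else mu2.

Definition obs_prob (e1 : bool) (o : report) : R :=
  if o is Some w then (if e1 then 1 else pi) * p_w1 mu0 w
  else if e1 then 0 else 1 - pi.

(* Period-2 continuation values of A and P for the decision row f = x-hat(r1, .),
   test e, disclosure rule d of an observed omega_2 and belief q = Pr[omega_2 = 1]. *)
Definition agent_cont (f : report -> bool) (e : bool) (d : bool -> bool) (q : R) : R :=
  let informed := q * b2R R (f (disclose d (Some true)))
                  + (1 - q) * b2R R (f (disclose d (Some false))) in
  if e then informed - c else pi * informed + (1 - pi) * b2R R (f None).

Definition principal_cont (f : report -> bool) (e : bool) (q : R) : R :=
  let informed := q * b2R R (f (Some true)) + (1 - q) * (1 - b2R R (f (Some false))) in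
  let blind := q * b2R R (f None) + (1 - q) * (1 - b2R R (f None)) in
  if e then informed - k else pi * informed + (1 - pi) * blind.

Definition obedient_cont (M : mech) (o : report) : R :=
  agent_cont (xhat M o) (sig2 M o) (fun _ => true) (belief o).

Lemma obs_prob_ge0 (e1 : bool) (o : report) :
  0 <= mu0 <= 1 -> 0 <= pi <= 1 -> 0 <= obs_prob e1 o.
Proof.
by move=> /andP[? ?] /andP[? ?]; case: o => [[]|]; case: e1; rewrite /obs_prob /p_w1 /=; nra.
Qed.

Lemma obs_prob_Some_gt0 (e1 w : bool) :
  0 < mu0 < 1 -> 0 < pi < 1 -> 0 < obs_prob e1 (Some w).
Proof. by move=> /andP[? ?] /andP[? ?]; case: e1; case: w; rewrite /obs_prob /p_w1 /=; nra. Qed.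

Lemma UA_decomp (M : mech) (s : strat) :
  UA mu0 rho pi c M s =
    \sum_(o : report) obs_prob (se1 s) o *
       agent_cont (xhat M (disclose (sd1 s) o)) (se2 s o) (sd2 s o) (belief o)
    - c * b2R R (se1 s).
Proof.
rewrite /UA sum_report !big_bool /x_of /effort /r2_of /e2_of /r1_of /o1_of /p_out.
rewrite /observe /agent_cont /belief /mu2 /obs_prob /p_trans /p_luck /p_w1 /=.
by case: (se1 s); case: (se2 s None); case: (se2 s (Some true)); case: (se2 s (Some false));
  rewrite /=; ring.
Qed.

Lemma payoffP_decomp (M : mech) :
  payoffP mu0 rho pi k M =
    \sum_(o : report) obs_prob (sig1 M) o * principal_cont (xhat M o) (sig2 M o) (belief o)
    - k * b2R R (sig1 M).
Proof.
rewrite /payoffP /UP sum_report !big_bool /x_of /effort /r2_of /e2_of /r1_of /o1_of /p_out.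
rewrite /observe /principal_cont /belief /mu2 /obs_prob /p_trans /p_luck /p_w1 /obedient /=.
by case: (sig1 M); case: (sig2 M None); case: (sig2 M (Some true)); case: (sig2 M (Some false));
  rewrite /= !eqb_id !eqbF_neg !b2R_negb; ring.
Qed.

Lemma UA_obedient (M : mech) :
  UA mu0 rho pi c M (obedient M) =
    \sum_(o : report) obs_prob (sig1 M) o * obedient_cont M o - c * b2R R (sig1 M).
Proof. by rewrite UA_decomp !sum_report. Qed.

(* Obedient except after the period-1 observation o: then report None iff hide,
   test iff e, and disclose omega_2 = w iff d w. *)
Definition deviation (M : mech) (o : report) (hide e : bool) (d : bool -> bool) : strat :=
  Strat (sig1 M) (fun w => (o != Some w) || ~~ hide)
    (fun o' => if o' == o then e else sig2 M o') (fun o' w => (o' != o) || d w).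

Lemma UA_deviation (M : mech) (o : report) (hide e : bool) (d : bool -> bool) :
  UA mu0 rho pi c M (deviation M o hide e d) =
    UA mu0 rho pi c M (obedient M) + obs_prob (sig1 M) o *
      (agent_cont (xhat M (if hide then None else o)) e d (belief o) - obedient_cont M o).
Proof.
rewrite UA_decomp UA_obedient !sum_report /obedient_cont.
by case: o => [[]|]; case: hide; rewrite /=; ring.
Qed.

Lemma IC_deviation (M : mech) (o : report) (hide e : bool) (d : bool -> bool) :
  IC mu0 rho pi c M -> 0 < obs_prob (sig1 M) o ->
  agent_cont (xhat M (if hide then None else o)) e d (belief o) <= obedient_cont M o.
Proof.
move=> [best _] o_pos; have := best (deviation M o hide e d).
by rewrite UA_deviation gerDl pmulr_rle0 // subr_le0.
Qed.

Lemma IC_period1_test (M : mech) : IC mu0 rho pi c M ->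
  mu0 * obedient_cont M (Some true) + (1 - mu0) * obedient_cont M (Some false) - c
    <= UA mu0 rho pi c M (obedient M).
Proof.
move=> [best _]; have := best (Strat true (fun _ => true) (sig2 M) (fun _ _ => true)).
by rewrite UA_decomp sum_report /obedient_cont /=; congr (_ <= _); ring.
Qed.

Lemma IC_of_row_bounds (M : mech) :
  0 <= mu0 <= 1 -> 0 <= pi <= 1 -> sig1 M = false ->
  (forall r1, sig2 M r1 -> xhat M r1 None = false) ->
  (forall o hide e d,
     agent_cont (xhat M (if hide then None else o)) e d (belief o) <= obedient_cont M o) ->
  mu0 * obedient_cont M (Some true) + (1 - mu0) * obedient_cont M (Some false) - c
    <= UA mu0 rho pi c M (obedient M) ->
  IC mu0 rho pi c M.
Proof.
move=> mu0_01 pi_01 sig1F recF row_le test_le; split=> // s.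
have cont_le o : agent_cont (xhat M (disclose (sd1 s) o)) (se2 s o) (sd2 s o) (belief o)
                   <= obedient_cont M o.
  case: o => [w|]; last exact: (row_le None false).
  by rewrite /=; case: (sd1 s w); [exact: (row_le (Some w) false) | exact: (row_le (Some w) true)].
have UA_le : UA mu0 rho pi c M s <=
    \sum_(o : report) obs_prob (se1 s) o * obedient_cont M o - c * b2R R (se1 s).
  by rewrite UA_decomp lerD2r; apply: ler_sum => o _; apply: ler_wpM2l; [exact: obs_prob_ge0|].
apply: (le_trans UA_le); case: (se1 s); last by rewrite UA_obedient sig1F.
by rewrite sum_report /obs_prob /p_w1 /= in test_le *; lra.
Qed.
End Continuation.

Section Rows.
Variables (R : realFieldType) (pi c k : R) (f : report -> bool) (q : R).

Definition follows_r2 : bool := [&& f (Some true), ~~ f (Some false) & ~~ f None].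

Lemma agent_cont_le1 (e : bool) (d : bool -> bool) :
  0 <= pi <= 1 -> 0 <= c -> 0 <= q <= 1 -> agent_cont pi c f e d q <= 1.
Proof.
move=> /andP[? ?] ? /andP[? ?]; rewrite /agent_cont /=.
by case: (f _); case: (f _); case: (f None); case: e; rewrite /b2R /=; nra.
Qed.

Lemma agent_cont_follows_r2_le (e : bool) (d : bool -> bool) (B : R) :
  follows_r2 -> 0 <= pi -> 0 <= c -> 0 <= q ->
  q - c <= B -> pi * q <= B -> agent_cont pi c f e d q <= B.
Proof.
case/and3P=> f1 /negbTE f0 /negbTE fN ? ? ? ? ?; rewrite /agent_cont /=.
by case: e; case: (d true); case: (d false); rewrite ?f1 ?f0 ?fN /b2R /=; nra.
Qed.

Lemma agent_cont_const_true (d : bool -> bool) :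
  (forall r, f r) -> agent_cont pi c f false d q = 1.
Proof. by move=> fT; rewrite /agent_cont !fT /b2R /=; ring. Qed.

Lemma principal_cont_const_true : (forall r, f r) -> principal_cont pi k f false q = q.
Proof. by move=> fT; rewrite /principal_cont !fT /b2R /=; ring. Qed.

Lemma principal_cont_tested_le : 0 <= q <= 1 -> principal_cont pi k f true q <= 1 - k.
Proof.
move=> /andP[? ?]; rewrite /principal_cont /=.
by case: (f (Some true)); case: (f (Some false)); rewrite /b2R; lra.
Qed.

Lemma principal_cont_le (e : bool) (B : R) :
  0 <= pi <= 1 -> 0 <= q <= 1 -> 1 - k <= B ->
  pi + (1 - pi) * q <= B -> pi + (1 - pi) * (1 - q) <= B ->
  principal_cont pi k f e q <= B.
Proof.
move=> /andP[? ?] q01 ? ? ?; case: e; first exact: le_trans (principal_cont_tested_le q01) _.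
case/andP: q01 => ? ?; rewrite /principal_cont /=.
by case: (f (Some true)); case: (f (Some false)); case: (f None); rewrite /b2R /=; nra.
Qed.

Lemma high_row_le_or_const_true (e : bool) :
  0 < pi <= 1 -> 0 < q < 1 -> k <= (1 - pi) * q -> (e -> f None = false) ->
  agent_cont pi c f false id q <= agent_cont pi c f e (fun _ => true) q ->
  agent_cont pi c f false (fun _ => false) q <= agent_cont pi c f e (fun _ => true) q ->
  principal_cont pi k f e q <= 1 - k \/ (e = false /\ forall r, f r).
Proof.
move=> /andP[? ?] /andP[? ?] ?; case: e => [_ _ _|_].
  by left; apply: principal_cont_tested_le; lra.
rewrite /agent_cont /principal_cont /=.
case fN: (f None); last first.
  by move=> _ _; left; case: (f (Some true)); case: (f (Some false)); rewrite /b2R /=; nra.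
case f0: (f (Some false)); last by rewrite /b2R /=; nra.
case f1: (f (Some true)); last by rewrite /b2R /=; nra.
by move=> _ _; right; split=> // -[[]|].
Qed.

Lemma principal_cont_gap (e : bool) :
  0 < pi <= 1 -> 0 <= q < 1 -> 0 <= k -> k <= (1 - pi) * q -> k <= (1 - pi) * (1 - q) ->
  (e -> f None = false) ->
  agent_cont pi c f false id q <= agent_cont pi c f e (fun _ => true) q ->
  ~~ follows_r2 -> pi * k <= (1 - pi) * (1 - k - principal_cont pi k f e q).
Proof.
move=> /andP[? ?] /andP[? ?] ? ? ?; rewrite /agent_cont /principal_cont /follows_r2 /=.
case: e => [/(_ isT)-> _|_]; [|case: (f None)];
  by case: (f (Some true)); case: (f (Some false)); rewrite /b2R /= => // *; nra.
Qed.
End Rows.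

Record assumptions (R : realFieldType) (mu0 rho pi c k : R) : Prop := Assumptions {
  mu0_gt0 : 0 < mu0; mu0_lt1 : mu0 < 1;
  rho_gt_half : 1 - rho < rho; rho_lt1 : rho < 1;
  pi_gt0 : 0 < pi; pi_lt1 : pi < 1;
  k_gt : (1 - rho) * (1 - pi) < k;
  k_le_mu2 : k <= (1 - pi) * mu2 mu0 rho;
  k_le_1_mu2 : k <= (1 - pi) * (1 - mu2 mu0 rho);
  c_gt : (1 - rho) * (1 - pi) < c;
  c_le_mu2 : c <= (1 - pi) * mu2 mu0 rho }.

Section Optimality.
Variables (R : realFieldType) (mu0 rho pi c k : R).
Hypothesis A : assumptions mu0 rho pi c k.

Lemma payoffP_mech_i : payoffP mu0 rho pi k mech_i =
  pi * mu0 * rho + pi * (1 - mu0) * (rho + pi * (1 - rho)) + (1 - pi) * (1 - k).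
Proof.
rewrite payoffP_decomp sum_report /principal_cont /belief /mu2 /obs_prob /p_w1 /p_trans /=.
by rewrite /b2R /=; ring.
Qed.

Lemma payoffP_mech_ii : payoffP mu0 rho pi k mech_ii =
  pi * mu0 * (1 - k) + pi * (1 - mu0) * (rho + pi * (1 - rho)) + (1 - pi) * (1 - k).
Proof.
rewrite payoffP_decomp sum_report /principal_cont /belief /mu2 /obs_prob /p_w1 /p_trans /=.
by rewrite /b2R /=; ring.
Qed.

Lemma mu2_between : 1 - rho <= mu2 mu0 rho <= rho.
Proof. by case: A => *; apply/andP; split; rewrite /mu2; nra. Qed.

Lemma cost_gt0 : 0 < c /\ 0 < k.
Proof. by case: A => *; split; nra. Qed.

Lemma IC_mech_ii : IC mu0 rho pi c mech_ii.
Proof.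
have := mu2_between; case: A => *.
apply: IC_of_row_bounds => //; [apply/andP; lra | apply/andP; lra | |].
  move=> o hide e d; apply: agent_cont_follows_r2_le => //;
    by case: o => [[]|]; rewrite /obedient_cont /agent_cont /belief /p_trans /b2R /=; nra.
rewrite UA_obedient sum_report /obedient_cont /agent_cont /obs_prob /belief /p_w1 /p_trans.
have : 0 <= (1 - (1 - pi) * (1 - mu0)) * (c - (1 - rho) * (1 - pi)) by apply: mulr_ge0; nra.
by rewrite /b2R /= /mu2; nra.
Qed.

Lemma IC_mech_i :
  (1 - pi) * (1 - rho) * (mu0 - (1 - mu0) * (1 - pi)) <= pi * c -> IC mu0 rho pi c mech_i.
Proof.
have := mu2_between; case: A => *.
have obedient_high : obedient_cont mu0 rho pi c mech_i (Some true) = 1.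
  by rewrite /obedient_cont agent_cont_const_true.
apply: IC_of_row_bounds => //; [apply/andP; lra | apply/andP; lra | by case=> [[]|] | |].
  move=> o hide e d; case: o hide => [[]|] [].
  2: rewrite obedient_high; apply: agent_cont_le1; rewrite /belief /p_trans /=;
       by try (apply/andP; split); nra.
  1-5: apply: agent_cont_follows_r2_le => //;
         by rewrite /obedient_cont /agent_cont /belief /p_trans /b2R /=; nra.
rewrite UA_obedient sum_report obedient_high /obedient_cont /agent_cont /obs_prob /belief.
by rewrite /p_w1 /p_trans /b2R /= /mu2; nra.
Qed.

Lemma principal_cont_none_le (f : report -> bool) (e : bool) :
  principal_cont pi k f e (mu2 mu0 rho) <= 1 - k.
Proof. by have := mu2_between; case: A => *; apply: principal_cont_le; try apply/andP; nra. Qed.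

Lemma principal_cont_low_le (f : report -> bool) (e : bool) (q : R) :
  q = rho \/ q = 1 - rho -> principal_cont pi k f e q <= rho + pi * (1 - rho).
Proof. by case=> ->; case: A => *; apply: principal_cont_le; try apply/andP; nra. Qed.

Lemma payoffP_tested_le (M : mech) :
  sig1 M -> payoffP mu0 rho pi k M <= payoffP mu0 rho pi k mech_ii.
Proof.
move=> tested; case: A => mu0_gt0 mu0_lt1 *.
rewrite payoffP_decomp tested sum_report payoffP_mech_ii /obs_prob /p_w1 /belief /p_trans /=.
have mu0_ge0 : 0 <= mu0 by lra.
have mu0'_ge0 : 0 <= 1 - mu0 by lra.
have := ler_wpM2l mu0_ge0 (principal_cont_low_le (xhat M (Some true)) (sig2 M (Some true))
                             (or_introl erefl)).
have := ler_wpM2l mu0'_ge0 (principal_cont_low_le (xhat M (Some false)) (sig2 M (Some false))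
                              (or_intror erefl)).
have [_ k_gt0] := cost_gt0.
have : 0 <= pi * k * (1 - mu0) by rewrite !mulr_ge0 //; lra.
have : 0 <= (1 - pi + pi * mu0) * ((1 - pi) * (1 - rho)) by rewrite !mulr_ge0 //; nra.
nra.
Qed.

Lemma IC_high_row (M : mech) : IC mu0 rho pi c M ->
  principal_cont pi k (xhat M (Some true)) (sig2 M (Some true)) rho <= 1 - k \/
  sig2 M (Some true) = false /\ forall r, xhat M (Some true) r.
Proof.
move=> ic; have := mu2_between; case: A => *.
have high_pos : 0 < obs_prob mu0 pi (sig1 M) (Some true) by apply: obs_prob_Some_gt0; apply/andP.
apply: high_row_le_or_const_true; try apply/andP; try nra.
- exact: ic.2.
- exact: (IC_deviation (o := Some true) false false id ic high_pos).
- exact: (IC_deviation (o := Some true) false false (fun _ => false) ic high_pos).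
Qed.

Lemma payoffP_untested_le (M : mech) : sig1 M = false ->
  payoffP mu0 rho pi k M <=
    pi * mu0 * principal_cont pi k (xhat M (Some true)) (sig2 M (Some true)) rho
    + pi * (1 - mu0) * (rho + pi * (1 - rho))
    + (1 - pi) * principal_cont pi k (xhat M None) (sig2 M None) (mu2 mu0 rho).
Proof.
move=> untested; have := mu2_between; case: A => *.
rewrite payoffP_decomp untested sum_report /obs_prob /p_w1 /belief /p_trans /=.
have low_weight_ge0 : 0 <= pi * (1 - mu0) by nra.
have := ler_wpM2l low_weight_ge0
  (principal_cont_low_le (xhat M (Some false)) (sig2 M (Some false)) (or_intror erefl)).
lra.
Qed.

Lemma IC_le_mech_ii_or_reward_high (M : mech) : IC mu0 rho pi c M ->
  payoffP mu0 rho pi k M <= payoffP mu0 rho pi k mech_ii \/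
  [/\ sig1 M = false, sig2 M (Some true) = false & forall r, xhat M (Some true) r].
Proof.
move=> ic; case tested: (sig1 M); first by left; apply: payoffP_tested_le; rewrite tested.
case: (IC_high_row ic) => [high_le|[passive reward]]; last by right.
left; apply: le_trans (payoffP_untested_le tested) _; rewrite payoffP_mech_ii.
have := principal_cont_none_le (xhat M None) (sig2 M None).
case: A => *; have high_weight_ge0 : 0 <= pi * mu0 by nra.
have := ler_wpM2l high_weight_ge0 high_le.
nra.
Qed.

Lemma payoffP_le_max (M : mech) : IC mu0 rho pi c M ->
  payoffP mu0 rho pi k M <= Num.max (payoffP mu0 rho pi k mech_i) (payoffP mu0 rho pi k mech_ii).
Proof.
case/IC_le_mech_ii_or_reward_high => [le_ii|[untested passive reward]].
  by rewrite le_max le_ii orbT.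
rewrite le_max; apply/orP; left; apply: le_trans (payoffP_untested_le untested) _.
rewrite passive principal_cont_const_true // payoffP_mech_i.
have := principal_cont_none_le (xhat M None) (sig2 M None).
case: A => *; nra.
Qed.

Lemma follows_r2_none_row_infeasible (f : report -> bool) (e : bool) (A0 : R) :
  pi * c < (1 - pi) * (1 - rho) * (mu0 - (1 - mu0) * (1 - pi)) -> follows_r2 f ->
  agent_cont pi c f false (fun _ => true) (1 - rho) <= A0 ->
  mu0 + (1 - mu0) * A0 - c
    <= pi * mu0 + pi * (1 - mu0) * A0
       + (1 - pi) * agent_cont pi c f e (fun _ => true) (mu2 mu0 rho) ->
  False.
Proof.
move=> gamma_lt follows conceal_low no_test1.
have := mu2_between; have [c_gt0 _] := cost_gt0; case: A => *.
(* As c <= (1 - pi) mu2, testing is A's best reply in this row. *)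
have none_le : agent_cont pi c f e (fun _ => true) (mu2 mu0 rho) <= mu2 mu0 rho - c.
  by apply: agent_cont_follows_r2_le => //; nra.
have low_value : agent_cont pi c f false (fun _ => true) (1 - rho) = pi * (1 - rho).
  by case/and3P: follows => f1 /negbTE f0 /negbTE fN; rewrite /agent_cont /= f1 f0 fN /b2R; ring.
rewrite low_value in conceal_low.
have pi'_ge0 : 0 <= 1 - pi by lra.
have low_weight_ge0 : 0 <= (1 - pi) * (1 - mu0) by nra.
have := ler_wpM2l pi'_ge0 none_le; have := ler_wpM2l low_weight_ge0 conceal_low.
rewrite /mu2; nra.
Qed.

Lemma payoffP_le_mech_ii (M : mech) :
  pi * c < (1 - pi) * (1 - rho) * (mu0 - (1 - mu0) * (1 - pi)) -> IC mu0 rho pi c M ->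
  payoffP mu0 rho pi k M <= payoffP mu0 rho pi k mech_ii.
Proof.
move=> gamma_lt ic; case: (IC_le_mech_ii_or_reward_high ic) => // -[untested passive reward].
apply: le_trans (payoffP_untested_le untested) _.
rewrite passive principal_cont_const_true // payoffP_mech_ii.
have := mu2_between; have [_ k_gt0] := cost_gt0.
case: A => mu0_gt0 mu0_lt1 ? ? pi_gt0 pi_lt1 *.
have none_pos : 0 < obs_prob mu0 pi (sig1 M) None by rewrite untested /obs_prob; lra.
have low_pos : 0 < obs_prob mu0 pi (sig1 M) (Some false).
  by apply: obs_prob_Some_gt0; apply/andP.
have high_obedient : obedient_cont mu0 rho pi c M (Some true) = 1.
  by rewrite /obedient_cont passive agent_cont_const_true.
have none_obedient : obedient_cont mu0 rho pi c M None
                     = agent_cont pi c (xhat M None) (sig2 M None) (fun _ => true) (mu2 mu0 rho).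
  by [].
have := IC_period1_test ic.
rewrite UA_obedient untested sum_report high_obedient none_obedient /obs_prob /p_w1 /=.
move=> no_test1.
have conceal_low := IC_deviation (o := Some false) true false (fun _ => true) ic low_pos.
case: (boolP (follows_r2 (xhat M None))) => [follows|not_follows].
  exfalso; apply: (follows_r2_none_row_infeasible (e := sig2 M None) gamma_lt follows).
    exact: conceal_low.
  lra.
have : pi * k <=
    (1 - pi) * (1 - k - principal_cont pi k (xhat M None) (sig2 M None) (mu2 mu0 rho)).
  apply: principal_cont_gap => //; try apply/andP; try nra.
  - exact: ic.2.
  - exact: (IC_deviation (o := None) false false id ic none_pos).
have : 0 <= pi * k * (1 - mu0) by rewrite !mulr_ge0 //; lra.
have : 0 <= pi * mu0 * (1 - rho) by rewrite !mulr_ge0 //; lra.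
lra.
Qed.

Lemma mech_i_optimal :
  1 - rho <= k -> (1 - pi) * (1 - rho) * (mu0 - (1 - mu0) * (1 - pi)) <= pi * c ->
  optimal_IC mu0 rho pi c k mech_i.
Proof.
move=> k_ge gamma_ge; split=> [|M /payoffP_le_max]; first exact: IC_mech_i.
rewrite max_l // payoffP_mech_i payoffP_mech_ii.
by case: A => *; rewrite lerD2r lerD2r; apply: ler_wpM2l; nra.
Qed.

Lemma mech_ii_optimal :
  k <= 1 - rho \/ pi * c < (1 - pi) * (1 - rho) * (mu0 - (1 - mu0) * (1 - pi)) ->
  optimal_IC mu0 rho pi c k mech_ii.
Proof.
case=> [k_le|gamma_lt]; split=> [|M]; try exact: IC_mech_ii; last exact: payoffP_le_mech_ii.
move/payoffP_le_max; rewrite max_r // payoffP_mech_i payoffP_mech_ii.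
by case: A => *; rewrite lerD2r lerD2r; apply: ler_wpM2l; nra.
Qed.
End Optimality.

Lemma assumptions_of_kappa_gamma (R : realFieldType) (mu0 rho pi c k : R) :
  0 < mu0 < 1 -> 2^-1 < rho < 1 -> 0 < pi < 1 ->
  1 - rho < k / (1 - pi) -> k / (1 - pi) <= Num.min (mu2 mu0 rho) (1 - mu2 mu0 rho) ->
  1 - rho < c / (1 - pi) -> c / (1 - pi) <= mu2 mu0 rho ->
  assumptions mu0 rho pi c k.
Proof.
move=> /andP[? ?] /andP[half_lt ?] /andP[? ?] k_gt; rewrite le_min => /andP[k_le k_le'] c_gt c_le.
have pi'_gt0 : 0 < 1 - pi by lra.
have half : (2 : R)^-1 * 2 = 1 by rewrite mulVf // pnatr_eq0.
split => //; first lra.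
- by rewrite -ltr_pdivlMr.
- by rewrite mulrC -ler_pdivrMr.
- by rewrite mulrC -ler_pdivrMr.
- by rewrite -ltr_pdivlMr.
- by rewrite mulrC -ler_pdivrMr.
Qed.

Unset Implicit Arguments.

Theorem proposition4 (R : realFieldType) (mu0 rho pi c k : R) :
  0 < mu0 < 1 -> 2^-1 < rho < 1 -> 0 < pi < 1 -> 0 < c -> 0 < k ->
  let kappa := k / (1 - pi) in
  let gamma := c / (1 - pi) in
  let mu2 := rho * mu0 + (1 - rho) * (1 - mu0) in
  let kbar := (1 - rho) / (1 - pi) in
  let gbar := (1 - rho) * (mu0 - (1 - mu0) * (1 - pi)) / pi in
  1 - rho < kappa -> kappa <= Num.min mu2 (1 - mu2) ->
  1 - rho < gamma -> gamma <= mu2 ->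
  (* (i) *)
  (kbar < kappa -> gbar <= gamma -> optimal_IC mu0 rho pi c k mech_i) /\
  (* (ii) *)
  ((kappa < kbar \/ gamma < gbar) -> optimal_IC mu0 rho pi c k mech_ii) /\
  (* (iii) *)
  (kappa = kbar -> gbar <= gamma ->
     optimal_IC mu0 rho pi c k mech_i /\ optimal_IC mu0 rho pi c k mech_ii).
Proof.
move=> mu0_01 rho_01 pi_01 _ _ kappa gamma mu2' kbar gbar k_gt k_le c_gt c_le.
have A := assumptions_of_kappa_gamma mu0_01 rho_01 pi_01 k_gt k_le c_gt c_le.
have pi_gt0 := pi_gt0 A; have pi'_gt0 : 0 < 1 - pi by have := pi_lt1 A; lra.
have kbar_ltE : (kbar < kappa) = (1 - rho < k) by rewrite ltr_pM2r // invr_gt0.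
have kappa_ltE : (kappa < kbar) = (k < 1 - rho) by rewrite ltr_pM2r // invr_gt0.
have kappa_eqE : kappa = kbar -> k = 1 - rho by apply: mulIf; rewrite invr_neq0 // gt_eqF.
have gbar_leE : (gbar <= gamma) =
    ((1 - pi) * (1 - rho) * (mu0 - (1 - mu0) * (1 - pi)) <= pi * c).
  by rewrite ler_pdivrMr // mulrAC ler_pdivlMr //; apply/idP/idP => ?; lra.
have gamma_ltE : (gamma < gbar) =
    (pi * c < (1 - pi) * (1 - rho) * (mu0 - (1 - mu0) * (1 - pi))).
  by rewrite ltNge gbar_leE -ltNge.
split; [|split].
- by rewrite kbar_ltE gbar_leE => /ltW; apply: (mech_i_optimal A).
- by rewrite kappa_ltE gamma_ltE => -[/ltW|] ?; apply: (mech_ii_optimal A); [left|right].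
- move=> /kappa_eqE k_eq; rewrite gbar_leE => gamma_ge.
  by split; [apply: (mech_i_optimal A) | apply: (mech_ii_optimal A); left]; rewrite // k_eq.
Qed.
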